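(* Let $n\ge 3$ and let $\mathcal{B}$ be the set of bases of any rank-$3$ matroid on the ground set $\mathbb{Z}_n$ invariant under the translation action of $\mathbb{Z}_n$ (equivalently, corresponding to a three-dimensional tropical subrepresentation of $\mathbb{B}[\mathbb{Z}_n]$). Then for every unit $u\in\mathbb{Z}_n^\times$, $f_{u,2u}=\{\{a,a+u,a+2u\}\mid a\in\mathbb{Z}_n\}\subseteq\mathcal{B}$.
   Context: $\mathbb{Z}_n$ acts on $\binom{\mathbb{Z}_n}{3}$ by $x\cdot\{a,b,c\}=\{x+a,x+b,x+c\}$. For $i,j\in\mathbb{Z}_n$ with $0,i,j$ pairwise distinct, $f_{i,j}=\{\{a,a+i,a+j\}\mid a\in\mathbb{Z}_n\}$. $\mathbb{Z}_n^\times$ denotes the units of $\mathbb{Z}_n$. *)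

From mathcomp Require Import all_boot all_algebra.
Set Implicit Arguments. Unset Strict Implicit. Unset Printing Implicit Defensive.
Import GRing.Theory.
Local Open Scope ring_scope.

Definition is_matroid_bases (T : finType) (B : {set {set T}}) : Prop :=
  B != set0 /\
  forall X Y, X \in B -> Y \in B -> forall x, x \in X :\: Y ->
    exists2 y, y \in Y :\: X & (X :\ x) :|: [set y] \in B.

Definition is_rank_matroid_bases (T : finType) (r : nat) (B : {set {set T}}) : Prop :=
  is_matroid_bases B /\ forall X, X \in B -> #|X| = r.

Definition translate (n : nat) (x : 'Z_n) (A : {set 'Z_n}) : {set 'Z_n} :=
  [set x + a | a in A].

Definition translation_invariant (n : nat) (B : {set {set 'Z_n}}) : Prop :=
  forall (x : 'Z_n) (X : {set 'Z_n}), X \in B -> translate x X \in B.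

Definition f_orbit (n : nat) (i j : 'Z_n) : {set {set 'Z_n}} :=
  [set [set a; a + i; a + j] | a : 'Z_n].

From mathcomp Require Import all_boot all_algebra.
Import GRing.Theory.
Local Open Scope ring_scope.
Set Implicit Arguments. Unset Strict Implicit.

(* In a loopless rank-3 matroid, "equal or in no common basis" is an equivalence
   relation, here also translation invariant.  Were [0] and [u] related, all of
   [Z_n = {ku}] would be one class, which a basis of three elements forbids; so
   some basis is [{0, u, c}].  If no translate of [{0, u, 2u}] were a basis, the
   exchange axiom applied to [{0, u, x + 2u}] and its translate by [x] would give
   a basis [{0, u, x}] or [{0, u, x + u}]; descending from [c = ku] ends at
   [{0, u, 0}] or [{0, u, u}], which are too small. *)

Lemma cards3_neq (T : finType) (a b c : T) :
  #|[set a; b; c]| = 3%N -> [/\ a != b, a != c & b != c].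
Proof.
have -> : [set a; b; c] = c |: [set a; b].
  by apply/setP => x; rewrite !inE orbC.
rewrite cardsU1 cards2 !inE.
by rewrite ![c == _]eq_sym; case: (a == b); case: (a == c); case: (b == c).
Qed.

Section Rank3Matroid.
Variables (T : finType) (B : {set {set T}}).
Hypothesis HB : is_rank_matroid_bases 3 B.

Lemma card_basis X : X \in B -> #|X| = 3%N.
Proof. exact: HB.2. Qed.

Lemma basis_set3 X x z : X \in B -> x \in X -> z \in X -> x != z ->
  exists c, X = [set x; z; c].
Proof.
move=> XB xX zX xz.
have : #|X :\: [set x; z]| == 1%N.
  rewrite cardsD (setIidPr _) ?cards2 ?xz ?card_basis //.
  by apply/subsetP => y; rewrite !inE => /orP[]/eqP->.
case/cards1P => c Xc; exists c; apply/setP => y.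
move/setP: Xc => /(_ y); rewrite !inE.
case: (eqVneq y x) => [->|yx]; first by rewrite xX.
case: (eqVneq y z) => [->|yz]; first by rewrite zX.
by rewrite /= => ->.
Qed.

Lemma basis_through X x : X \in B -> x \in X -> exists s t, X = [set x; s; t].
Proof.
move=> XB xX; have : (0 < #|X :\ x|)%N.
  by have := card_basis XB; rewrite (cardsD1 x) xX add1n => [[->]].
case/card_gt0P => s; rewrite !inE => /andP[sx sX].
have [|t ->] := basis_set3 XB xX sX; first by rewrite eq_sym.
by exists s, t.
Qed.

Lemma basis_extend p q r Y : [set p; q; r] \in B -> Y \in B ->
  exists2 y, y \in Y & [set p; q; y] \in B.
Proof.
move=> XB YB; have [_ pr qr] := cards3_neq (card_basis XB).
case: (boolP (r \in Y)) => rY; first by exists r.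
have := HB.1.2 _ _ XB YB r; rewrite !inE rY eqxx !orbT => /(_ isT) [y].
rewrite inE => /andP[_ yY] XyB; exists y => //.
suff <- : ([set p; q; r] :\ r) :|: [set y] = [set p; q; y] by [].
apply/setP => w; rewrite !inE.
case: (eqVneq w r) => [->|wr] /=; last by rewrite orbF.
by rewrite !(eq_sym r) (negbTE pr) (negbTE qr).
Qed.

Lemma basis_pair_exchange p q r a b c :
  [set p; q; r] \in B -> [set a; b; c] \in B ->
  [\/ [set p; q; c] \in B, [set a; b; p] \in B | [set a; b; q] \in B].
Proof.
move=> XB YB; have [z] := basis_extend XB YB.
rewrite !inE -orbA => /or3P[] /eqP-> WB; last by constructor 1.
all: have [w] := basis_extend YB WB.
all: rewrite !inE -orbA => /or3P[] /eqP-> ABB.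
1,2,4,5: by [constructor 2 | constructor 3].
all: by have := cards3_neq (card_basis ABB); rewrite eqxx => -[].
Qed.

Definition share_basis x y := [exists X in B, (x \in X) && (y \in X)].

Lemma share_basisP x y :
  reflect (exists2 X, X \in B & (x \in X) && (y \in X)) (share_basis x y).
Proof.
apply: (iffP existsP) => [[X /andP[XB xyX]]|[X XB xyX]]; first by exists X.
by exists X; rewrite XB.
Qed.

Definition parallel x y := (x == y) || ~~ share_basis x y.

Hypothesis loopless : forall x, exists2 X, X \in B & x \in X.

Lemma parallel_trans : transitive parallel.
Proof.
move=> y x z; rewrite /parallel.
case: (eqVneq x y) => [-> _ -> //|_ /= nxy].
case: (eqVneq y z) => [<- _|_ /= nyz]; first by rewrite nxy orbT.
case: (eqVneq x z) => //= xz; apply/negP => /share_basisP [X XB /andP[xX zX]].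
have [c Xe] := basis_set3 XB xX zX xz.
have meets_y W t : W \in B -> y \in W -> t \in W -> t \in [set x; z] -> False.
  move=> WB yW tW; rewrite !inE => /orP[]/eqP tE; rewrite tE in tW.
  - by move/share_basisP: nxy; apply; exists W; rewrite // tW yW.
  - by move/share_basisP: nyz; apply; exists W; rewrite // tW yW.
have [Y YB yY] := loopless y; have [s [t Ye]] := basis_through YB yY.
rewrite Ye in YB; rewrite Xe in XB.
have [w] := basis_extend YB XB; rewrite !inE -orbA => /or3P[] /eqP-> W1.
- by apply: (meets_y _ x W1); rewrite !inE eqxx ?orbT.
- by apply: (meets_y _ z W1); rewrite !inE eqxx ?orbT.
have W1' : [set c; y; s] \in B.
  by move: W1; congr (_ \in B); apply/setP => v; rewrite !inE orbC orbA.
have [w' w'X W2] := basis_extend W1' XB.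
have [_ cw' _] := cards3_neq (card_basis W2).
move: w'X; rewrite !inE -orbA => /or3P[] /eqP w'e; subst w'.
- by apply: (meets_y _ x W2); rewrite !inE eqxx ?orbT.
- by apply: (meets_y _ z W2); rewrite !inE eqxx ?orbT.
- by rewrite eqxx in cw'.
Qed.

End Rank3Matroid.

Lemma Zp_nat_mul_unit (n : nat) (u x : 'Z_n) : u \is a GRing.unit ->
  exists k, x = k%:R * u.
Proof. by move=> Hu; exists (val (x / u)); rewrite natr_Zp mulrVK. Qed.

Section TranslationInvariant.
Variables (n : nat) (B : {set {set 'Z_n}}).
Hypotheses (HB : is_rank_matroid_bases 3 B) (Hinv : translation_invariant B).

Lemma translate_set3 (x p q r : 'Z_n) :
  translate x [set p; q; r] = [set x + p; x + q; x + r].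
Proof. by rewrite /translate !imsetU !imset_set1. Qed.

Lemma Zp_loopless x : exists2 X, X \in B & x \in X.
Proof.
have /set0Pn [X XB] := HB.1.1.
have /card_gt0P [e eX] : (0 < #|X|)%N by rewrite (card_basis HB XB).
exists (translate (x - e) X); first exact: Hinv.
by apply/imsetP; exists e; rewrite ?subrK.
Qed.

Lemma share_basis_translate x a b :
  share_basis B (x + a) (x + b) = share_basis B a b.
Proof.
have shift y c d : share_basis B c d -> share_basis B (y + c) (y + d).
  case/share_basisP => X XB /andP[cX dX]; apply/share_basisP.
  by exists (translate y X); rewrite ?Hinv // !imset_f.
apply/idP/idP; last exact: shift.
by move/(shift (- x)); rewrite !addKr.
Qed.

Lemma parallel_translate x a b : parallel B (x + a) (x + b) = parallel B a b.
Proof. by rewrite /parallel share_basis_translate (inj_eq (addrI x)). Qed.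

Variable u : 'Z_n.
Hypothesis Hu : u \is a GRing.unit.

(* By translation invariance, [0 ∥ u] gives [ku ∥ (k+1)u] for every [k]. *)
Lemma parallel_0_all : parallel B 0 u -> forall x, parallel B 0 x.
Proof.
move=> par0u x; have [k ->] := Zp_nat_mul_unit x Hu.
elim: k => [|k IHk]; first by rewrite mul0r /parallel eqxx.
apply: (parallel_trans HB Zp_loopless IHk).
by rewrite mulrSr mulrDl mul1r -{1}[_ * u]addr0 parallel_translate.
Qed.

Lemma share_basis_0_unit : share_basis B 0 u.
Proof.
apply: contraT => no0u; exfalso.
have par0 x : parallel B 0 x.
  by apply: parallel_0_all; rewrite /parallel no0u orbT.
have [X XB X0] := Zp_loopless 0; have [q [r Xe]] := basis_through HB XB X0.
rewrite Xe in XB; have [q0 _ _] := cards3_neq (card_basis HB XB).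
have := par0 q; rewrite /parallel (negbTE q0) /= => /negP; apply.
by apply/share_basisP; exists [set 0; q; r]; rewrite // !inE !eqxx ?orbT.
Qed.

Lemma basis_0_unit_descent x :
  (forall b, [set b; b + u; b + 2%:R * u] \notin B) ->
  [set 0; u; x + 2%:R * u] \in B ->
  [set 0; u; x] \in B \/ [set 0; u; x + u] \in B.
Proof.
move=> no_f Y0B; have := Hinv x Y0B; rewrite translate_set3 addr0 => XB.
case: (basis_pair_exchange HB XB Y0B) => YB.
- by rewrite (negbTE (no_f x)) in YB.
- by left.
- by right.
Qed.

Lemma f_orbit_meets_basis : [exists b, [set b; b + u; b + 2%:R * u] \in B].
Proof.
apply: contraT => /existsPn no_f.
have never k : [set 0; u; k%:R * u] \notin B /\ [set 0; u; k.+1%:R * u] \notin B.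
  elim: k => [|k [IH1 IH2]].
    by split; apply/negP => /(card_basis HB)/cards3_neq [];
      rewrite ?mul0r ?mul1r eqxx.
  split=> //; apply/negP.
  rewrite -[k.+2]addn2 natrD mulrDl => /(basis_0_unit_descent no_f).
  by rewrite mulrSr mulrDl mul1r in IH2; rewrite (negbTE IH1) (negbTE IH2) => -[].
have [X XB /andP[X0 Xu]] := share_basisP _ _ _ share_basis_0_unit.
have [|c Xe] := basis_set3 HB XB X0 Xu.
  by apply: contraTneq Hu => <-; rewrite unitr0.
have [k ck] := Zp_nat_mul_unit c Hu.
by have [+ _] := never k; rewrite -ck -Xe XB.
Qed.

End TranslationInvariant.

Theorem mainTheorem14 (n : nat) (Hn : (3 <= n)%N) (B : {set {set 'Z_n}})
  (HB : is_rank_matroid_bases 3 B) (Hinv : translation_invariant B)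
  (u : 'Z_n) (Hu : u \is a GRing.unit) :
  f_orbit u (2%:R * u) \subset B.
Proof.
apply/subsetP => _ /imsetP [a _ ->].
have /existsP [b bB] := f_orbit_meets_basis HB Hinv Hu.
by have := Hinv (a - b) _ bB; rewrite translate_set3 !addrA !subrK.
Qed.
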